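(* Let $H:=\{(s,t)\in\mathbb{R}^2: t\ge 0\}$, equipped with the metric induced by the supremum norm $\|(a,b)\|_\infty=\max\{|a|,|b|\}$ on $\mathbb{R}^2$. Then $H$ admits two distinct reversible conical bicombings.
   Context: A bicombing on a metric space $(X,d)$ is a map $\sigma\colon X\times X\times[0,1]\to X$ such that each $\sigma_{xy}:=\sigma(x,y,\cdot)$ is a geodesic from $x$ to $y$ ($\sigma_{xy}(0)=x$, $\sigma_{xy}(1)=y$, $d(\sigma_{xy}(s),\sigma_{xy}(t))=|s-t|d(x,y)$). It is conical if $d(\sigma_{xy}(t),\sigma_{x'y'}(t))\le(1-t)d(x,x')+t\,d(y,y')$ for all $x,y,x',y'$, $t\in[0,1]$, and reversible if $\sigma_{xy}(t)=\sigma_{yx}(1-t)$ for all $x,y,t$. *)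

From Stdlib Require Import Reals.
Open Scope R_scope.

Definition I01 : Type := {t : R | 0 <= t <= 1}.
Definition tval (t : I01) : R := proj1_sig t.

Lemma I01_0_prf : 0 <= 0 <= 1. Proof. split; [apply Rle_refl | apply Rle_0_1]. Qed.
Lemma I01_1_prf : 0 <= 1 <= 1. Proof. split; [apply Rle_0_1 | apply Rle_refl]. Qed.
Definition t0 : I01 := exist _ 0 I01_0_prf.
Definition t1 : I01 := exist _ 1 I01_1_prf.

Section Bicombing.
Variable X : Type.
Variable d : X -> X -> R.

Definition is_bicombing (sigma : X -> X -> I01 -> X) : Prop :=
  forall x y : X,
    sigma x y t0 = x /\ sigma x y t1 = y /\
    (forall s t : I01,
        d (sigma x y s) (sigma x y t) = Rabs (tval s - tval t) * d x y).

Definition is_conical (sigma : X -> X -> I01 -> X) : Prop :=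
  forall (x y x' y' : X) (t : I01),
    d (sigma x y t) (sigma x' y' t) <= (1 - tval t) * d x x' + tval t * d y y'.

Lemma I01_rev_prf (t : I01) : 0 <= 1 - tval t <= 1.
Proof. destruct t as [t [h0 h1]]; simpl; split.
  - apply Rge_le, Rge_minus, Rle_ge, h1.
  - rewrite <- (Rminus_0_r 1) at 2. apply Rplus_le_compat_l, Ropp_le_contravar, h0.
Qed.
Definition I01_rev (t : I01) : I01 := exist _ (1 - tval t) (I01_rev_prf t).

Definition is_reversible (sigma : X -> X -> I01 -> X) : Prop :=
  forall (x y : X) (t : I01), sigma x y t = sigma y x (I01_rev t).

Definition reversible_conical_bicombing (sigma : X -> X -> I01 -> X) : Prop :=
  is_bicombing sigma /\ is_conical sigma /\ is_reversible sigma.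
End Bicombing.

Definition H : Type := {p : R * R | 0 <= snd p}.
Definition dinf (p q : R * R) : R :=
  Rmax (Rabs (fst p - fst q)) (Rabs (snd p - snd q)).
Definition dH (p q : H) : R := dinf (proj1_sig p) (proj1_sig q).

(** The sup-norm half-plane [H] is a 1-Lipschitz retract of [(R^2, sup) × R]
    along the isometric embedding [x ↦ (x, |x_1|)]: for [0 <= k <= 1/2] the map
    [((a, b), c) ↦ (a, max(0, b, k (c - |a|)))] is 1-Lipschitz and fixes the image
    of [H].  Composing the straight-line bicombing of [R^3] with any 1-Lipschitz
    retraction gives a reversible conical bicombing.  For [k = 0] this is the
    straight-line bicombing of [H]; for [k = 1/2] the midpoint of [(-1,0)] and
    [(1,0)] is lifted to [(0,1/2)], so the two bicombings differ. *)

From Stdlib Require Import Reals Lra ProofIrrelevance.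
Open Scope R_scope.

Lemma Rmax_lipschitz p q p' q' :
  Rabs (Rmax p q - Rmax p' q') <= Rmax (Rabs (p - p')) (Rabs (q - q')).
Proof.
  unfold Rmax, Rabs.
  repeat (destruct Rle_dec || destruct Rcase_abs); lra.
Qed.

Lemma Rmax_conical (t a b a' b' : R) : 0 <= t <= 1 ->
  Rmax ((1 - t) * a + t * a') ((1 - t) * b + t * b')
  <= (1 - t) * Rmax a b + t * Rmax a' b'.
Proof.
  intros Ht.
  pose proof (Rmax_l a b); pose proof (Rmax_r a b).
  pose proof (Rmax_l a' b'); pose proof (Rmax_r a' b').
  apply Rmax_lub; nra.
Qed.

Section Metric.

Variables (X : Type) (d : X -> X -> R).
Hypothesis d_sym : forall x y, d x y = d y x.
Hypothesis d_triangle : forall x y z, d x z <= d x y + d y z.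

(* A path from [x] to [y] that is [d x y]-Lipschitz cannot be shortcut: the
   triangle inequality through [c s] and [c t] forces equality. *)
Lemma lipschitz_path_geodesic (c : I01 -> X) (x y : X) :
  c t0 = x -> c t1 = y ->
  (forall s t, d (c s) (c t) <= Rabs (tval s - tval t) * d x y) ->
  forall s t, d (c s) (c t) = Rabs (tval s - tval t) * d x y.
Proof.
  intros c0 c1 c_lip.
  assert (ordered : forall s t, tval s <= tval t ->
            d (c s) (c t) = Rabs (tval s - tval t) * d x y).
  { intros s t st. apply Rle_antisym; [apply c_lip|].
    pose proof (c_lip t0 s) as head; rewrite c0 in head.
    pose proof (c_lip t t1) as tail; rewrite c1 in tail.
    pose proof (d_triangle x (c s) y); pose proof (d_triangle (c s) (c t) y).
    destruct s as [s Hs], t as [t Ht]; simpl in *.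
    rewrite !Rabs_left1 in * by lra.
    lra. }
  intros s t. destruct (Rle_dec (tval s) (tval t)).
  - now apply ordered.
  - rewrite d_sym, Rabs_minus_sym. apply ordered. lra.
Qed.

Section Retract.

Variables (V : Type) (dV : V -> V -> R).
Variable tau : V -> V -> I01 -> V.
Hypothesis tau_rcb : reversible_conical_bicombing V dV tau.
Variables (iota : X -> V) (rho : V -> X).
Hypothesis iota_isometry : forall x y, dV (iota x) (iota y) = d x y.
Hypothesis rho_lipschitz : forall u v, d (rho u) (rho v) <= dV u v.
Hypothesis rho_iota : forall x, rho (iota x) = x.

Definition retract_bicombing (x y : X) (t : I01) : X :=
  rho (tau (iota x) (iota y) t).

Lemma reversible_conical_bicombing_retract :
  reversible_conical_bicombing X d retract_bicombing.
Proof.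
  destruct tau_rcb as [tau_bic [tau_con tau_rev]].
  unfold retract_bicombing; split; [|split].
  - intros x y.
    destruct (tau_bic (iota x) (iota y)) as [tau0 [tau1 tau_geo]].
    assert (c0 : rho (tau (iota x) (iota y) t0) = x) by now rewrite tau0.
    assert (c1 : rho (tau (iota x) (iota y) t1) = y) by now rewrite tau1.
    split; [exact c0|split; [exact c1|]].
    apply (lipschitz_path_geodesic _ x y c0 c1).
    intros s t. rewrite <- (iota_isometry x y), <- tau_geo. apply rho_lipschitz.
  - intros x y x' y' t. rewrite <- (iota_isometry x x'), <- (iota_isometry y y').
    eapply Rle_trans; [apply rho_lipschitz|apply tau_con].
  - intros x y t. now rewrite tau_rev.
Qed.

End Retract.

End Metric.

Section Product.

Variables (A B : Type) (dA : A -> A -> R) (dB : B -> B -> R).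
Variables (sA : A -> A -> I01 -> A) (sB : B -> B -> I01 -> B).

Definition dprod (p q : A * B) : R := Rmax (dA (fst p) (fst q)) (dB (snd p) (snd q)).

Definition bicombing_prod (p q : A * B) (t : I01) : A * B :=
  (sA (fst p) (fst q) t, sB (snd p) (snd q) t).

Lemma reversible_conical_bicombing_prod :
  reversible_conical_bicombing A dA sA -> reversible_conical_bicombing B dB sB ->
  reversible_conical_bicombing (A * B) dprod bicombing_prod.
Proof.
  intros [A_bic [A_con A_rev]] [B_bic [B_con B_rev]].
  unfold dprod, bicombing_prod; split; [|split].
  - intros [a b] [a' b']; simpl.
    destruct (A_bic a a') as [-> [-> A_geo]], (B_bic b b') as [-> [-> B_geo]].
    split; [easy|split; [easy|]].
    intros s t. rewrite A_geo, B_geo. apply RmaxRmult, Rabs_pos.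
  - intros p q p' q' t.
    eapply Rle_trans; [apply Rle_max_compat_l, B_con|].
    eapply Rle_trans; [apply Rle_max_compat_r, A_con|].
    apply Rmax_conical, (proj2_sig t).
  - intros p q t. now rewrite A_rev, B_rev.
Qed.

End Product.

Definition dR (a b : R) : R := Rabs (a - b).

Definition lerp (a b : R) (t : I01) : R := (1 - tval t) * a + tval t * b.

Lemma reversible_conical_bicombing_lerp : reversible_conical_bicombing R dR lerp.
Proof.
  unfold dR, lerp; split; [|split].
  - intros a b; cbn; split; [ring|split; [ring|]].
    intros s t. rewrite (Rabs_minus_sym a b), <- Rabs_mult. f_equal. ring.
  - intros a b a' b' [t Ht]; simpl.
    replace ((1 - t) * a + t * b - ((1 - t) * a' + t * b'))
      with ((1 - t) * (a - a') + t * (b - b')) by ring.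
    eapply Rle_trans; [apply Rabs_triang|].
    rewrite !Rabs_mult, (Rabs_pos_eq t), (Rabs_pos_eq (1 - t)) by lra. lra.
  - intros a b t; simpl. ring.
Qed.

Lemma dinf_sym (p q : R * R) : dinf p q = dinf q p.
Proof. unfold dinf. now rewrite (Rabs_minus_sym (fst p)), (Rabs_minus_sym (snd p)). Qed.

Lemma dinf_triangle (p q r : R * R) : dinf p r <= dinf p q + dinf q r.
Proof.
  unfold dinf.
  pose proof (Rabs_triang (fst p - fst q) (fst q - fst r)).
  pose proof (Rabs_triang (snd p - snd q) (snd q - snd r)).
  replace (fst p - fst q + (fst q - fst r)) with (fst p - fst r) in * by ring.
  replace (snd p - snd q + (snd q - snd r)) with (snd p - snd r) in * by ring.
  pose proof (Rmax_l (Rabs (fst p - fst q)) (Rabs (snd p - snd q))).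
  pose proof (Rmax_r (Rabs (fst p - fst q)) (Rabs (snd p - snd q))).
  pose proof (Rmax_l (Rabs (fst q - fst r)) (Rabs (snd q - snd r))).
  pose proof (Rmax_r (Rabs (fst q - fst r)) (Rabs (snd q - snd r))).
  apply Rmax_lub; lra.
Qed.

Definition dlift : (R * R) * R -> (R * R) * R -> R := dprod (R * R) R dinf dR.

Definition lerp_lift : (R * R) * R -> (R * R) * R -> I01 -> (R * R) * R :=
  bicombing_prod (R * R) R (bicombing_prod R R lerp lerp) lerp.

Lemma reversible_conical_bicombing_lerp_lift :
  reversible_conical_bicombing ((R * R) * R) dlift lerp_lift.
Proof.
  apply reversible_conical_bicombing_prod; [|exact reversible_conical_bicombing_lerp].
  (* [dinf] is convertible to [dprod R R dR dR]. *)
  apply (reversible_conical_bicombing_prod R R dR dR); exact reversible_conical_bicombing_lerp.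
Qed.

Definition lift (x : H) : (R * R) * R := (proj1_sig x, Rabs (fst (proj1_sig x))).

Lemma lift_isometry (x y : H) : dlift (lift x) (lift y) = dH x y.
Proof.
  unfold dlift, dprod, dR, dH; simpl.
  apply Rmax_left.
  eapply Rle_trans; [apply Rabs_triang_inv2|]. apply Rmax_l.
Qed.

(* The outer [0] makes [retract] land in [H]; it is inactive on segments
   between points of [H], whose middle coordinate is already nonnegative. *)
Definition fold_height (k : R) (p : (R * R) * R) : R :=
  Rmax 0 (Rmax (snd (fst p)) (k * (snd p - Rabs (fst (fst p))))).

Definition retract (k : R) (p : (R * R) * R) : H :=
  exist _ (fst (fst p), fold_height k p) (Rmax_l _ _).

Lemma retract_lift (k : R) (x : H) : retract k (lift x) = x.
Proof.
  destruct x as [[s t] Ht]; simpl in Ht.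
  unfold retract, lift, fold_height; simpl. apply subset_eq_compat. f_equal.
  rewrite Rminus_diag, Rmult_0_r, (Rmax_left t 0), (Rmax_right 0 t) by lra.
  reflexivity.
Qed.

(* [k <= 1/2] absorbs the factor 2 in [|c - c'| + ||a| - |a'|| <= 2 max(|a - a'|, |c - c'|)]. *)
Lemma fold_term_lipschitz (k a c a' c' : R) : 0 <= k <= 1/2 ->
  Rabs (k * (c - Rabs a) - k * (c' - Rabs a')) <= Rmax (Rabs (a - a')) (Rabs (c - c')).
Proof.
  intros Hk.
  replace (k * (c - Rabs a) - k * (c' - Rabs a'))
    with (k * ((c - c') + (Rabs a' - Rabs a))) by ring.
  rewrite Rabs_mult, (Rabs_pos_eq k) by lra.
  pose proof (Rabs_triang (c - c') (Rabs a' - Rabs a)).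
  pose proof (Rabs_triang_inv2 a' a). rewrite (Rabs_minus_sym a') in *.
  pose proof (Rmax_l (Rabs (a - a')) (Rabs (c - c'))).
  pose proof (Rmax_r (Rabs (a - a')) (Rabs (c - c'))).
  pose proof (Rabs_pos (c - c' + (Rabs a' - Rabs a))).
  nra.
Qed.

Lemma retract_lipschitz (k : R) : 0 <= k <= 1/2 ->
  forall u v, dH (retract k u) (retract k v) <= dlift u v.
Proof.
  intros Hk [[a b] c] [[a' b'] c'].
  unfold dH, dlift, dprod, dinf, dR, fold_height; simpl.
  set (M := Rmax (Rmax (Rabs (a - a')) (Rabs (b - b'))) (Rabs (c - c'))).
  assert (aM : Rabs (a - a') <= M).
  { apply Rle_trans with (2 := Rmax_l _ _). apply Rmax_l. }
  assert (bM : Rabs (b - b') <= M).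
  { apply Rle_trans with (2 := Rmax_l _ _). apply Rmax_r. }
  assert (cM : Rabs (c - c') <= M) by apply Rmax_r.
  apply Rmax_lub; [exact aM|].
  eapply Rle_trans; [apply Rmax_lipschitz|]. apply Rmax_lub.
  { rewrite Rminus_diag, Rabs_R0. exact (Rle_trans _ _ _ (Rabs_pos _) aM). }
  eapply Rle_trans; [apply Rmax_lipschitz|]. apply Rmax_lub; [exact bM|].
  eapply Rle_trans; [apply fold_term_lipschitz, Hk|]. now apply Rmax_lub.
Qed.

Definition half_plane_bicombing (k : R) : H -> H -> I01 -> H :=
  retract_bicombing H ((R * R) * R) lerp_lift lift (retract k).

Lemma reversible_conical_bicombing_half_plane (k : R) : 0 <= k <= 1/2 ->
  reversible_conical_bicombing H dH (half_plane_bicombing k).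
Proof.
  intros Hk.
  apply (reversible_conical_bicombing_retract H dH) with (dV := dlift).
  - intros x y. apply dinf_sym.
  - intros x y z. apply dinf_triangle.
  - exact reversible_conical_bicombing_lerp_lift.
  - exact lift_isometry.
  - exact (retract_lipschitz k Hk).
  - exact (retract_lift k).
Qed.

Definition H_left : H := exist _ (-1, 0) (Rle_refl 0).
Definition H_right : H := exist _ (1, 0) (Rle_refl 0).
Definition I01_half : I01 := exist (fun t => 0 <= t <= 1) (1/2) ltac:(lra).

Lemma half_plane_bicombing_midpoint_height (k : R) : 0 <= k ->
  snd (proj1_sig (half_plane_bicombing k H_left H_right I01_half)) = k.
Proof.
  intros Hk. cbn.
  unfold fold_height, lerp_lift, bicombing_prod, lift, lerp; simpl.
  rewrite (Rabs_left (-1)), Rabs_R1 by lra.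
  replace ((1 - 1/2) * -1 + 1/2 * 1) with 0 by field. rewrite Rabs_R0.
  unfold Rmax; repeat destruct Rle_dec; lra.
Qed.

Theorem proposition1p4 :
  exists sigma1 sigma2 : H -> H -> I01 -> H,
    reversible_conical_bicombing H dH sigma1 /\
    reversible_conical_bicombing H dH sigma2 /\
    sigma1 <> sigma2.
Proof.
  exists (half_plane_bicombing 0), (half_plane_bicombing (1/2)).
  split; [|split].
  - apply reversible_conical_bicombing_half_plane; lra.
  - apply reversible_conical_bicombing_half_plane; lra.
  - intros same.
    pose proof (half_plane_bicombing_midpoint_height 0 (Rle_refl 0)) as h0.
    pose proof (half_plane_bicombing_midpoint_height (1/2) ltac:(lra)) as h1.
    rewrite same, h1 in h0. lra.
Qed.
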